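(* Consider the following kinetic transport model. Let $\{Z_k\}_{k\ge1}$ be a Markov chain on the two states $\{\mathrm{F},\mathrm{A}\}$ with initial distribution $\lambda=(\lambda_{\mathrm F},\lambda_{\mathrm A})$ and transition matrix $$\begin{pmatrix}1-a & a\\ b & 1-b\end{pmatrix}$$ (rows and columns indexed by $\mathrm F,\mathrm A$), $a,b\in[0,1]$. Let $K_n=\sum_{k=1}^n \mathbf 1_{\{Z_k=\mathrm F\}}$. Independently of $\{Z_k\}$, let $(X_k,Y_k)_{k\ge1}$ be i.i.d. with $$P((X_k,Y_k)=(1,j))=\alpha,\qquad P((X_k,Y_k)=(-1,j))=\beta\qquad (j=\pm1),$$ where $\alpha,\beta\ge0$, $\alpha+\beta=1/2$. Let $\tilde S(n)=(\tilde S_X(n),\tilde S_Y(n))=\sum_{k=1}^{K_n}(X_k+1,Y_k)$ and $n\ge1$. Then the conditional variance $\operatorname{Var}(\tilde S_Y(n)\mid \tilde S_X(n)=2x)$ is an increasing (non-decreasing) function of $x\in\{0,1,\dots,n\}$.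
   Context: Conditional variances are considered for conditioning events of positive probability. *)

(* The kinetic transport model run for n steps, realised on
   the finite sample space of all trajectories of (Z_k, X_k, Y_k), k = 1..n,
   with its exact joint law (Markov chain Z independent of the i.i.d. pairs). *)
From HB Require Import structures.
From mathcomp Require Import all_boot all_order all_algebra.
Set Implicit Arguments. Unset Strict Implicit. Unset Printing Implicit Defensive.
Import Order.TTheory GRing.Theory Num.Theory.
Local Open Scope ring_scope.

Section Model.
Variables (R : realFieldType) (n : nat).
(* Markov-chain parameters: states F = true, A = false. *)
Variables (lamF lamA a b : R).
Variables (alpha beta : R).

(* A sample point: (z, xs, ys); index i : 'I_n stands for time k = i+1.
   z i = true  <-> Z_{i+1} = F;  xs i = true <-> X_{i+1} = 1 (else -1);
   ys i = true <-> Y_{i+1} = 1 (else -1). *)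
Definition traj := {ffun 'I_n -> bool}.
Definition omega := (traj * traj * traj)%type.

Definition at_time (z : traj) (k : nat) : bool :=
  if @insub nat (fun k => k < n)%N _ k is Some i then z i else false.

Definition init_law (s : bool) : R := if s then lamF else lamA.

Definition trans (s t : bool) : R :=
  match s, t with
  | true, true => 1 - a | true, false => a
  | false, true => b | false, false => 1 - b
  end.

Definition chain_weight (z : traj) : R :=
  init_law (at_time z 0) *
  \prod_(0 <= k < n.-1) trans (at_time z k) (at_time z k.+1).

Definition step_weight (x y : bool) : R := if x then alpha else beta.

Definition weight (w : omega) : R :=
  let: (z, xs, ys) := w in
  chain_weight z * \prod_(i < n) step_weight (xs i) (ys i).

Definition sgn (s : bool) : R := if s then 1 else -1.

Definition Kn (w : omega) : nat := let: (z, _, _) := w in (\sum_(i < n) z i)%N.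

Definition SX (w : omega) : R :=
  let: (z, xs, ys) := w in \sum_(i < n | (i < Kn w)%N) (sgn (xs i) + 1).

Definition SY (w : omega) : R :=
  let: (z, xs, ys) := w in \sum_(i < n | (i < Kn w)%N) sgn (ys i).

Definition Prob (A : pred omega) : R := \sum_(w | A w) weight w.

Definition condE (f : omega -> R) (A : pred omega) : R :=
  (\sum_(w | A w) weight w * f w) / Prob A.

Definition condVar (f : omega -> R) (A : pred omega) : R :=
  condE (fun w => (f w - condE f A) ^+ 2) A.

Definition SX_event (x : nat) : pred omega := fun w => SX w == 2 * x%:R.

End Model.

(* Given the chain Z, i.e. given K_n = k, the Y-steps are fair signs independent of
   everything else, so S_Y has conditional mean 0 and conditional second moment k;
   hence Var(S_Y | S_X = 2x) = E[K_n | S_X = 2x].  Given K_n = k, the weight of the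
   event {S_X = 2x} is C(k, x) alpha^x beta^(k-x) (alpha+beta)^(n-k), a kernel that
   is totally positive of order 2 in (k, x), and such a likelihood makes the
   posterior mean of K_n nondecreasing in the observation x. *)

From HB Require Import structures.
From mathcomp Require Import all_boot all_order all_algebra.
From mathcomp Require Import ring lra zify.
Import Order.TTheory GRing.Theory Num.Theory.
Set Implicit Arguments. Unset Strict Implicit. Unset Printing Implicit Defensive.
Local Open Scope ring_scope.

Section MonotoneLikelihoodRatio.
Variables (R : realFieldType) (I : finType) (c f g h : I -> R).
Hypothesis c_ge0 : forall i, 0 <= c i.
Hypothesis mlr : forall i j, f i <= f j -> g j * h i <= g i * h j.

Lemma ler_cross_sum_mlr :
  (\sum_i c i * f i * g i) * (\sum_i c i * h i) <=
  (\sum_i c i * f i * h i) * (\sum_i c i * g i).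
Proof.
(* Symmetrising the double sum in (i, j) writes twice the difference as a sum of
   the nonnegative terms D i j. *)
pose D i j := c i * c j * ((f j - f i) * (g i * h j - g j * h i)).
have D_ge0 i j : 0 <= D i j.
  apply: mulr_ge0; first exact: mulr_ge0.
  have [fij | fji] := lerP (f i) (f j).
    by rewrite mulr_ge0 // subr_ge0 ?mlr.
  by rewrite -mulrNN !opprB mulr_ge0 // subr_ge0 ?mlr ?ltW.
set S := \sum_i \sum_j c i * c j * f i * (h i * g j - g i * h j).
have S_swap : S = \sum_i \sum_j c j * c i * f j * (h j * g i - g j * h i).
  by rewrite /S exchange_big.
rewrite -subr_ge0.
have -> : (\sum_i c i * f i * h i) * (\sum_i c i * g i) -
          (\sum_i c i * f i * g i) * (\sum_i c i * h i) = S.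
  rewrite !mulr_suml -sumrB; apply: eq_bigr => i _.
  rewrite !mulr_sumr -sumrB; apply: eq_bigr => j _; ring.
have twice_S : S + S = \sum_i \sum_j D i j.
  rewrite {1}S_swap /S -big_split; apply: eq_bigr => i _.
  rewrite -big_split; apply: eq_bigr => j _; rewrite /D /=; ring.
suff : 0 <= S + S by lra.
by rewrite twice_S sumr_ge0 // => i _; rewrite sumr_ge0.
Qed.

Lemma ler_wmean_mlr :
  0 < \sum_i c i * g i -> 0 < \sum_i c i * h i ->
  (\sum_i c i * f i * g i) / (\sum_i c i * g i) <=
  (\sum_i c i * f i * h i) / (\sum_i c i * h i).
Proof.
move=> g_gt0 h_gt0; rewrite ler_pdivrMr // mulrAC ler_pdivlMr //.
exact: ler_cross_sum_mlr.
Qed.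

End MonotoneLikelihoodRatio.

Section Binomial.
Local Open Scope nat_scope.

Lemma leq_bin_TP2 k l x y : x <= y -> k <= l ->
  'C(l, x) * 'C(k, y) <= 'C(k, x) * 'C(l, y).
Proof.
move=> le_xy; have [lt_ky _ | le_yk] := ltnP k y.
  by rewrite (bin_small lt_ky) muln0.
elim: l => [|l IHl]; first by rewrite leqn0 => /eqP <-.
rewrite leq_eqVlt ltnS => /predU1P [<- // | le_kl].
have le_yl := leq_trans le_yk le_kl; have le_xl := leq_trans le_xy le_yl.
rewrite -(@leq_pmul2r ((l.+1 - x) * (l.+1 - y))); last first.
  by rewrite muln_gt0 !subn_gt0 !ltnS le_xl le_yl.
have down m : (l.+1 - m) * 'C(l.+1, m) = l.+1 * 'C(l, m) by rewrite -mul_bin_down.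
have -> : 'C(l.+1, x) * 'C(k, y) * ((l.+1 - x) * (l.+1 - y)) =
          l.+1 * 'C(l, x) * 'C(k, y) * (l.+1 - y) by rewrite -down; ring.
have -> : 'C(k, x) * 'C(l.+1, y) * ((l.+1 - x) * (l.+1 - y)) =
          l.+1 * 'C(l, y) * 'C(k, x) * (l.+1 - x) by rewrite -down; ring.
rewrite leq_mul ?leq_sub2l // -!mulnA leq_mul2l.
by rewrite [_ * 'C(k, x)]mulnC IHl ?orbT.
Qed.

End Binomial.

Lemma coef_exp_linear (R : comNzRingType) (a b : R) k i :
  ((a%:P * 'X + b%:P) ^+ k)`_i = 'C(k, i)%:R * a ^+ i * b ^+ (k - i).
Proof.
elim: k i => [|k IHk] [|i].
- by rewrite coef1 !expr0 !mulr1.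
- by rewrite coef1 bin0n !mul0r.
- rewrite exprSr mulrDr coefD mulrA coefMX !coefMC /= add0r IHk.
  by rewrite !bin0 !subn0 exprSr mulrA.
rewrite exprSr mulrDr coefD mulrA coefMX !coefMC /= !IHk binS natrD subSS.
have [lt_ik | le_ki] := ltnP i k; last first.
  by rewrite (@bin_small k i.+1) ?ltnS // !mul0r addr0 exprS; ring.
rewrite -(subnSK lt_ik) !exprS; ring.
Qed.

Lemma prodr_cond_ltn (R : comNzRingType) n k (q r : R) : (k <= n)%N ->
  \prod_(i < n) (if (i < k)%N then q else r) = q ^+ k * r ^+ (n - k).
Proof.
move=> le_kn; rewrite -(big_mkord xpredT (fun i => if (i < k)%N then q else r))
  (@big_cat_nat _ _ _ k 0 n) // /=.
rewrite (@eq_big_nat _ _ _ 0 k _ (fun=> q)) => [|i /andP [_ ->] //].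
rewrite (@eq_big_nat _ _ _ k n _ (fun=> r)) => [|i /andP [le_ki _]]; last first.
  by rewrite ltnNge le_ki.
by rewrite !prodr_const_nat subn0.
Qed.

Lemma sum_traj_prod (R : comNzRingType) n (G : 'I_n -> bool -> R) :
  \sum_(s : traj n) \prod_(i < n) G i (s i) = \prod_(i < n) (G i true + G i false).
Proof.
transitivity (\prod_(i < n) \sum_(b : bool) G i b); first by rewrite bigA_distr_bigA.
by apply: eq_bigr => i _; rewrite big_bool.
Qed.

Section Trajectories.
Variables (R : realFieldType) (n : nat).

Lemma sum_sgn (i : 'I_n) : \sum_(s : traj n) sgn R (s i) = 0.
Proof.
transitivity (\sum_(s : traj n) \prod_(m < n) (if m == i then sgn R (s m) else 1)).
  by apply: eq_bigr => s _; rewrite -big_mkcond big_pred1_eq.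
rewrite (sum_traj_prod (fun m b => if m == i then sgn R b else 1)).
by rewrite (bigD1 i) //= eqxx /sgn subrr mul0r.
Qed.

Lemma sum_sgnM (i j : 'I_n) :
  \sum_(s : traj n) sgn R (s i) * sgn R (s j) = (i == j)%:R * 2 ^+ n.
Proof.
transitivity (\sum_(s : traj n) \prod_(m < n)
    ((if m == i then sgn R (s m) else 1) * (if m == j then sgn R (s m) else 1))).
  by apply: eq_bigr => s _; rewrite big_split /= -!big_mkcond !big_pred1_eq.
rewrite (sum_traj_prod (fun m b =>
  (if m == i then sgn R b else 1) * (if m == j then sgn R b else 1))).
have [<- | neq_ij] := eqVneq i j.
  rewrite mul1r -[X in _ ^+ X]card_ord -prodr_const; apply: eq_bigr => m _.
  by case: (m == i); rewrite /sgn ?mulrNN !mulr1.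
by rewrite (bigD1 i) //= eqxx (negbTE neq_ij) /sgn !mulr1 subrr !mul0r.
Qed.

End Trajectories.

Section Model.
Variables (R : realFieldType) (n : nat) (lamF lamA a b alpha beta : R).

Definition nbF (z : traj n) : nat := (\sum_(i < n) z i)%N.

Definition nb_up (k : nat) (s : traj n) : nat := (\sum_(i < n | (i < k)%N) s i)%N.

Definition up_weight (s : traj n) : R := \prod_(i < n) (if s i then alpha else beta).

Definition nb_up_weight (k x : nat) : R := \sum_(s : traj n | nb_up k s == x) up_weight s.

Lemma nbF_le z : (nbF z <= n)%N.
Proof.
rewrite -[X in (_ <= X)%N]card_ord -sum1_card.
by apply: leq_sum => i _; case: (z i).
Qed.

Lemma sum_SY z xs : \sum_(ys : traj n) SY R (z, xs, ys) = 0.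
Proof. by rewrite exchange_big big1 // => i _; rewrite sum_sgn. Qed.

Lemma sum_SY2 z xs : \sum_(ys : traj n) SY R (z, xs, ys) ^+ 2 = (nbF z)%:R * 2 ^+ n.
Proof.
transitivity (\sum_(i < n | (i < nbF z)%N) \sum_(j < n | (j < nbF z)%N)
    \sum_(ys : traj n) sgn R (ys i) * sgn R (ys j)).
  under eq_bigr => ys _ do rewrite expr2 mulr_suml.
  rewrite exchange_big; apply: eq_bigr => i _.
  under eq_bigr => ys _ do rewrite mulr_sumr.
  by rewrite exchange_big.
transitivity (\sum_(i < n | (i < nbF z)%N) (2 ^+ n : R)).
  apply: eq_bigr => i lt_i; rewrite (bigD1 i) //= sum_sgnM eqxx mul1r big1 ?addr0 //.
  by move=> j /andP [_ neq_ji]; rewrite sum_sgnM eq_sym (negbTE neq_ji) mul0r.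
by rewrite -(big_ord_widen _ (fun=> 2 ^+ n) (nbF_le z)) sumr_const card_ord mulr_natl.
Qed.

Lemma SX_eventE x z xs ys : SX_event R x (z, xs, ys) = (nb_up (nbF z) xs == x).
Proof.
rewrite /SX_event; have -> : SX R (z, xs, ys) = 2 * (nb_up (nbF z) xs)%:R.
  rewrite /SX /nb_up /= natr_sum mulr_sumr; apply: eq_bigr => i _.
  by case: (xs i); rewrite /sgn ?mulr1 ?mulr0 ?addNr.
by rewrite (inj_eq (mulfI _)) ?eqr_nat ?pnatr_eq0.
Qed.

Lemma sum_omega (H : omega n -> R) :
  \sum_w H w = \sum_(z : traj n) \sum_(xs : traj n) \sum_(ys : traj n) H (z, xs, ys).
Proof. by rewrite [RHS]pair_bigA [RHS]pair_bigA; apply: eq_bigr => -[[z xs] ys] _. Qed.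

Notation weight := (weight lamF lamA a b alpha beta).
Notation chain_weight := (chain_weight lamF lamA a b).

Lemma sum_SX_event x (g : omega n -> R) :
  \sum_(w | SX_event R x w) weight w * g w =
  \sum_(z : traj n) chain_weight z *
    \sum_(xs : traj n | nb_up (nbF z) xs == x)
      up_weight xs * \sum_(ys : traj n) g (z, xs, ys).
Proof.
rewrite big_mkcond sum_omega; apply: eq_bigr => z _.
rewrite mulr_sumr [RHS]big_mkcond; apply: eq_bigr => xs _.
under eq_bigr => ys _ do rewrite SX_eventE.
by case: eqP => _; [rewrite mulrA mulr_sumr; apply: eq_bigr | rewrite big1].
Qed.

Lemma Prob_SX_event x :
  Prob lamF lamA a b alpha beta (@SX_event R n x) =
  2 ^+ n * \sum_(z : traj n) chain_weight z * nb_up_weight (nbF z) x.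
Proof.
rewrite /Prob (eq_bigr (fun w => weight w * 1)) => [|w _]; last by rewrite mulr1.
rewrite sum_SX_event mulr_sumr; apply: eq_bigr => z _.
rewrite /nb_up_weight mulrCA !mulr_sumr; apply: eq_bigr => xs _.
by rewrite sumr_const card_ffun card_bool card_ord -natrX mulr_natr mulr_natl.
Qed.

Lemma condE_SY x : condE lamF lamA a b alpha beta (@SY R n) (@SX_event R n x) = 0.
Proof.
rewrite /condE sum_SX_event big1 ?mul0r // => z _.
by rewrite big1 ?mulr0 // => xs _; rewrite sum_SY mulr0.
Qed.

Lemma condVar_SY x :
  condVar lamF lamA a b alpha beta (@SY R n) (@SX_event R n x) =
  (\sum_(z : traj n) chain_weight z * (nbF z)%:R * nb_up_weight (nbF z) x) /
  (\sum_(z : traj n) chain_weight z * nb_up_weight (nbF z) x).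
Proof.
rewrite /condVar condE_SY /condE Prob_SX_event sum_SX_event.
have -> : \sum_(z : traj n) chain_weight z * \sum_(xs : traj n | nb_up (nbF z) xs == x)
      up_weight xs * \sum_(ys : traj n) (SY R (z, xs, ys) - 0) ^+ 2 =
    2 ^+ n * \sum_(z : traj n) chain_weight z * (nbF z)%:R * nb_up_weight (nbF z) x.
  rewrite mulr_sumr; apply: eq_bigr => z _.
  under eq_bigr => xs _ do under eq_bigr => ys _ do rewrite subr0.
  under eq_bigr => xs _ do rewrite sum_SY2.
  by rewrite -mulr_suml /nb_up_weight; ring.
by rewrite -mulf_div divff ?mul1r ?expf_neq0 ?pnatr_eq0.
Qed.

Lemma nb_up_weight_binomial k x : (k <= n)%N ->
  nb_up_weight k x =
    'C(k, x)%:R * alpha ^+ x * beta ^+ (k - x) * (alpha + beta) ^+ (n - k).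
Proof.
(* nb_up_weight k x is the x-th coefficient of the generating polynomial of nb_up k,
   which factorises over the coordinates. *)
move=> le_kn.
pose term (i : 'I_n) (c : bool) : {poly R} :=
  (if c then alpha else beta)%:P * 'X^(if (i < k)%N then nat_of_bool c else 0%N).
transitivity ((\sum_(s : traj n) \prod_(i < n) term i (s i))`_x).
  rewrite /nb_up_weight coef_sum big_mkcond; apply: eq_bigr => s _.
  rewrite big_split /= -rmorph_prod prodrXr -big_mkcond coefCM coefXn eq_sym.
  by case: eqP; rewrite ?mulr1 ?mulr0.
rewrite (sum_traj_prod term).
transitivity ((\prod_(i < n) (if (i < k)%N then alpha%:P * 'X + beta%:P
                                            else (alpha + beta)%:P))`_x).
  apply: (congr1 (fun p : {poly R} => p`_x)); apply: eq_bigr => i _; rewrite /term.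
  by case: (i < k)%N; rewrite ?expr0 ?expr1 ?mulr1 ?polyCD.
by rewrite prodr_cond_ltn // -rmorphXn coefMC coef_exp_linear.
Qed.

Lemma nb_up_weight_TP2 k l x y : 0 <= alpha -> 0 <= beta ->
  (x <= y)%N -> (k <= l)%N -> (l <= n)%N ->
  nb_up_weight l x * nb_up_weight k y <= nb_up_weight k x * nb_up_weight l y.
Proof.
move=> alpha_ge0 beta_ge0 le_xy le_kl le_ln; have le_kn := leq_trans le_kl le_ln.
have [lt_ky | le_yk] := ltnP k y.
  rewrite [nb_up_weight k y]nb_up_weight_binomial // (bin_small lt_ky) !mul0r mulr0.
  by rewrite !nb_up_weight_binomial // !mulr_ge0 ?exprn_ge0 ?addr_ge0 ?ler0n.
set M := alpha ^+ (x + y) * beta ^+ (k - x + (l - y)) *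
         (alpha + beta) ^+ (n - l + (n - k)).
have beta_exp : (l - x + (k - y) = k - x + (l - y))%N by lia.
have -> : nb_up_weight l x * nb_up_weight k y = ('C(l, x) * 'C(k, y))%:R * M.
  by rewrite !nb_up_weight_binomial // /M -beta_exp !exprD natrM; ring.
have -> : nb_up_weight k x * nb_up_weight l y = ('C(k, x) * 'C(l, y))%:R * M.
  by rewrite !nb_up_weight_binomial // /M !exprD natrM; ring.
by rewrite ler_wpM2r ?ler_nat ?leq_bin_TP2 // !mulr_ge0 ?exprn_ge0 ?addr_ge0.
Qed.

Lemma chain_weight_ge0 (z : traj n) :
  0 <= lamF -> 0 <= lamA -> 0 <= a <= 1 -> 0 <= b <= 1 -> 0 <= chain_weight z.
Proof.
move=> lamF_ge0 lamA_ge0 /andP [a_ge0 a_le1] /andP [b_ge0 b_le1].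
rewrite /chain_weight mulr_ge0 //; first by rewrite /init_law; case: ifP.
apply: prodr_ge0 => i _; rewrite /trans.
by case: at_time; case: at_time; rewrite ?subr_ge0.
Qed.

End Model.

Theorem proposition5 (R : realFieldType) (n : nat) (lamF lamA a b alpha beta : R) :
  (0 < n)%N ->
  0 <= lamF -> 0 <= lamA -> lamF + lamA = 1 ->
  0 <= a <= 1 -> 0 <= b <= 1 ->
  0 <= alpha -> 0 <= beta -> alpha + beta = 2^-1 ->
  forall x y : nat, (x <= y <= n)%N ->
  0 < @Prob R n lamF lamA a b alpha beta (@SX_event R n x) ->
  0 < @Prob R n lamF lamA a b alpha beta (@SX_event R n y) ->
  @condVar R n lamF lamA a b alpha beta (@SY R n) (@SX_event R n x)
  <= @condVar R n lamF lamA a b alpha beta (@SY R n) (@SX_event R n y).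
Proof.
move=> _ lamF_ge0 lamA_ge0 _ a01 b01 alpha_ge0 beta_ge0 _ x y /andP [le_xy le_yn] Px Py.
rewrite !Prob_SX_event !pmulr_rgt0 ?exprn_gt0 // in Px Py.
rewrite !condVar_SY; apply: ler_wmean_mlr => // [z | z z'].
  exact: chain_weight_ge0.
by rewrite ler_nat => le_zz'; apply: nb_up_weight_TP2 => //; apply: nbF_le.
Qed.
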